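(* Let $1\le j\le r-1$. Then $$\ker\phi^{(j)}_{N,r}\;\cong\;\bigoplus_{n<N}\mathbf V_{N-n,r-j}\otimes\{v\in\mathsf{Vect}_{n,j}: vE_{n,j}=0\}.$$ (Concretely, writing $Q=\sum_{n<N}\sum_{(n_1,\dots,n_{r-j})\in S_{N-n,r-j}}x_1^{n_1-1}\cdots x_{r-j}^{n_{r-j}-1}R_{n_1,\dots,n_{r-j}}(x_{r-j+1},\dots,x_r)$ with $R_{n_1,\dots,n_{r-j}}\in\mathbf V_{n,j}$, one has $Q\in\ker\phi^{(j)}_{N,r}$ iff $\pi(R_{n_1,\dots,n_{r-j}})E_{n,j}=0$ for all components.)
   Context: For integers $N,r\ge1$ let $S_{N,r}=\{(n_1,\dots,n_r)\in\mathbb Z^r:\ n_1+\dots+n_r=N,\ \text{each } n_i\ge3 \text{ odd}\}$; when used as an index set it is ordered lexicographically decreasingly. $\mathbf V_{N,r}$ is the $\mathbb Q$-span of the monomials $x_1^{n_1-1}\cdots x_r^{n_r-1}$ with $(n_1,\dots,n_r)\in S_{N,r}$. $\mathsf{Vect}_{N,r}=\mathbb Q^{S_{N,r}}$ (row vectors), and $\pi:\mathbf V_{N,r}\to\mathsf{Vect}_{N,r}$ is the isomorphism sending $\sum a_{n_1,\dots,n_r}x_1^{n_1-1}\cdots x_r^{n_r-1}$ to $(a_{n_1,\dots,n_r})_{(n_1,\dots,n_r)\in S_{N,r}}$. Ihara action: for $f\in\mathbb Q[t]$ and a polynomial $g$ in $r-1$ variables, $(f\mathbin{\underline\circ}g)(x_1,\dots,x_r)=f(x_1)g(x_2,\dots,x_r)+\sum_{i=1}^{r-1}\big(f(x_{i+1}-x_i)g(x_1,\dots,\widehat{x_{i+1}},\dots,x_r)-(-1)^{\deg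 f}f(x_i-x_{i+1})g(x_1,\dots,\widehat{x_i},\dots,x_r)\big)$ (hats denote omitted variables). For positive integers $m_i,n_i$, $e\binom{m_1,\dots,m_r}{n_1,\dots,n_r}$ is the coefficient of $x_1^{n_1-1}\cdots x_r^{n_r-1}$ in $t^{m_1-1}\mathbin{\underline\circ}\,(y_1^{m_2-1}\cdots y_{r-1}^{m_r-1})$. $E_{N,r}$ is the $S_{N,r}\times S_{N,r}$ matrix with $(m,n)$-entry $e\binom{m}{n}$; for $j=1$ this is the $1\times1$ identity-type matrix on $S_{n,1}$ (entries $e\binom{m_1}{n_1}=\delta_{m_1n_1}$). The restricted totally even part of a polynomial is the sum of its monomials in which every variable $x_1,\dots,x_r$ occurs with even exponent $\ge2$. For $1\le j\le r$, $\phi^{(j)}_{N,r}:\mathbf V_{N,r}\to\mathbf V_{N,r}$ is the linear map sending $Q$ to the restricted totally even part of $Q(x_1,\dots,x_r)+\sum_{i=r-j+1}^{r-1}\big(Q(x_1,\dots,x_{r-j},x_{i+1}-x_i,x_{r-j+1},\dots,\widehat{x_{i+1}},\dots,x_r)-Q(x_1,\dots,x_{r-j},x_{i+1}-x_i,x_{r-j+1},\dots,\widehat{x_i},\dots,x_r)\big)$ (in each term the argument list after $x_{i+1}-x_i$ is $x_{r-j+1},\dots,x_r$ with one variable omitted). In particular $\phi^{(1)}_{N,r}=\mathrm{id}$. *)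

(* Multivariate polynomials over Q are built as iterated
   univariate polynomials: mpoly n = Q[x_0,...,x_{n-1}] (0-based variables),
   with x_{n-1} the outermost polynomial variable. *)
From HB Require Import structures.
From mathcomp Require Import all_boot all_order all_algebra.
Set Implicit Arguments. Unset Strict Implicit. Unset Printing Implicit Defensive.
Import Order.TTheory GRing.Theory Num.Theory.
Local Open Scope ring_scope.

Fixpoint mpoly (n : nat) : comNzRingType :=
  if n is n'.+1 then {poly (mpoly n')} else rat.

Fixpoint mX (n k : nat) {struct n} : mpoly n :=
  match n return mpoly n with
  | 0 => 0
  | n'.+1 => if k == n' then ('X : {poly mpoly n'}) else (mX n' k)%:P
  end.

Fixpoint mC (n : nat) (c : rat) {struct n} : mpoly n :=
  match n return mpoly n with
  | 0 => c
  | n'.+1 => ((mC n' c)%:P : {poly mpoly n'})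
  end.

Fixpoint msubst (n m : nat) (s : nat -> mpoly m) {struct n} : mpoly n -> mpoly m :=
  match n return mpoly n -> mpoly m with
  | 0 => fun p => mC m p
  | n'.+1 => fun p : {poly mpoly n'} =>
      \sum_(i < size p) msubst s p`_i * s n' ^+ i
  end.

Fixpoint mcoef (n : nat) (e : nat -> nat) {struct n} : mpoly n -> rat :=
  match n return mpoly n -> rat with
  | 0 => fun p => p
  | n'.+1 => fun p : {poly mpoly n'} => mcoef e p`_(e n')
  end.

Definition mmono (n : nat) (e : nat -> nat) : mpoly n :=
  \prod_(k < n) mX n k ^+ e k.

Fixpoint rte (n : nat) {struct n} : mpoly n -> mpoly n :=
  match n return mpoly n -> mpoly n with
  | 0 => fun p => p
  | n'.+1 => fun p : {poly mpoly n'} =>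
      \sum_(i < size p | ~~ odd i && (2 <= i)%N) (rte p`_i)%:P * 'X^i
  end.

Definition inS (N r : nat) (s : seq nat) : bool :=
  [&& size s == r, all (fun a => odd a && (3 <= a)%N) s & sumn s == N].

Definition expo (s : seq nat) (k : nat) : nat := (nth 1%N s k).-1.

Definition inV (N r : nat) (Q : mpoly r) : Prop :=
  forall e : nat -> nat, mcoef e Q != 0 -> inS N r (mkseq (fun k => (e k).+1) r).

(* phi^{(j)}_{r} (0-based variables; paper's x_i is mX r (i-1)) *)
Definition phi (r j : nat) (Q : mpoly r) : mpoly r :=
  let sub (i o : nat) :=
    msubst (fun p => if (p < r - j)%N then mX r p
                     else if p == (r - j)%N then mX r i - mX r i.-1
                     else mX r (bump o p.-1)) Q in
  rte (Q + \sum_(r - j + 1 <= i < r) (sub i i - sub i i.-1)).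

(* Ihara action f o g, f in Q[t] = mpoly 1, g in mpoly r, result in mpoly r.+1 *)
Definition ihara (r : nat) (f : mpoly 1) (g : mpoly r) : mpoly r.+1 :=
  let F (a : mpoly r.+1) := msubst (fun _ => a) f in
  let G (o : nat) := msubst (fun p => mX r.+1 (bump o p)) g in
  F (mX r.+1 0) * G 0 +
  \sum_(1 <= i < r.+1)
     (F (mX r.+1 i - mX r.+1 i.-1) * G i
      - (-1) ^+ (size (f : {poly rat})).-1 * F (mX r.+1 i.-1 - mX r.+1 i) * G i.-1).

Definition ecoef (r : nat) (m n : seq nat) : rat :=
  mcoef (expo n)
    (ihara (('X ^+ (nth 1%N m 0).-1)%R : {poly rat}) (mmono r (fun k => (nth 1%N m k.+1).-1))).

(* pi(R_{s}) evaluated at index m: coefficient of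
   x_1^(s_1-1)...x_{r-j}^(s_{r-j}-1) * x_{r-j+1}^(m_1-1)...x_r^(m_j-1) in Q *)
Definition piR (r : nat) (Q : mpoly r) (s m : seq nat) : rat :=
  mcoef (expo (s ++ m)) Q.

Arguments inV N r Q : clear implicits.
Arguments phi r j Q : clear implicits.
Arguments piR r Q s m : clear implicits.
Arguments ecoef r m n : clear implicits.

(* The part of [phi] inside the restriction only moves the last [j] variables:
   it sends a monomial x'^α x''^β (split after the first [r - j] variables) to
   x'^α times the Ihara action t^β_1 ∘ y^(β_2, ..., β_j), written in the last
   [j] variables.  Hence for totally even [e] the coefficient of x^e in
   [phi Q] is Σ_v π(R_s)_v e(v; w), where [s] and [w] are the two index blocks
   of [e], and as [Q] lies in V_{N,r} only the v in S_{N-|s|,j} contribute.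
   By homogeneity, the totally even [e] carrying a nonzero coefficient have
   s in S_{|s|,r-j} and w in S_{N-|s|,j}: exactly the pairs in the statement. *)

From HB Require Import structures.
From mathcomp Require Import all_boot all_order all_algebra.
From mathcomp Require Import zify.
Set Implicit Arguments. Unset Strict Implicit. Unset Printing Implicit Defensive.
Import GRing.Theory.
Local Open Scope ring_scope.

Lemma mcoef_is_zmod_morphism n e : zmod_morphism (@mcoef n e).
Proof. by elim: n e => [//|n IH] e p q /=; rewrite coefB IH. Qed.

HB.instance Definition _ n e :=
  GRing.isZmodMorphism.Build (mpoly n) rat (@mcoef n e) (@mcoef_is_zmod_morphism n e).

Lemma mcoefCM n e c (p : mpoly n) : mcoef e (mC n c * p) = c * mcoef e p.
Proof. by elim: n e p => [//|n IH] e p /=; rewrite coefCM IH. Qed.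

Definition eq_upto n (e t : nat -> nat) := all (fun k => e k == t k) (iota 0 n).

Lemma eq_uptoP n e t : reflect (forall k, (k < n)%N -> e k = t k) (eq_upto n e t).
Proof.
apply: (iffP allP) => et k => [kn|]; last by rewrite mem_iota => /andP[_ /et/eqP].
by apply/eqP/et; rewrite mem_iota.
Qed.

Lemma eq_uptoS n e t : eq_upto n.+1 e t = eq_upto n e t && (e n == t n).
Proof. by rewrite /eq_upto -addn1 iotaD all_cat /= andbT. Qed.

Lemma eq_upto_ext n e f g :
  (forall k, (k < n)%N -> f k = g k) -> eq_upto n e f = eq_upto n e g.
Proof. by move=> fg; apply/eq_uptoP/eq_uptoP => efg k kn; rewrite efg ?fg. Qed.

Lemma eq_upto_cat a j e t (u : nat -> nat) :
  eq_upto (a + j) e (fun k => if (k < a)%N then t k else u (k - a)%N) =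
  eq_upto a e t && eq_upto j (fun k => e (a + k)%N) u.
Proof.
apply/eq_uptoP/andP => [etu|[/eq_uptoP et /eq_uptoP eu] k kaj].
  split; apply/eq_uptoP => k kj.
    by rewrite etu ?kj // ltn_addr.
  by rewrite etu ?ltn_add2l // ltnNge leq_addr addKn.
by case: ltnP => [/et //|ak]; rewrite -eu ?subnKC // ltn_subLR.
Qed.

Lemma eq_mcoef n e e' (p : mpoly n) :
  (forall k, (k < n)%N -> e k = e' k) -> mcoef e p = mcoef e' p.
Proof. by elim: n p => [//|n IH] p ee' /=; rewrite ee' // IH // => k /ltnW/ee'. Qed.

Lemma mpolyP n (p q : mpoly n) : (forall e, mcoef e p = mcoef e q) <-> p = q.
Proof.
split=> [|-> //]; elim: n p q => [|n IH] p q pq; first exact: (pq (fun _ => 0%N)).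
apply/polyP => i; apply: IH => e.
pose e' k := if k == n then i else e k.
have ee' k : (k < n)%N -> e' k = e k by rewrite /e' => /ltn_eqF->.
by have := pq e'; rewrite /= /e' eqxx !(eq_mcoef _ ee').
Qed.

Lemma eq_mmono n t u : (forall k, (k < n)%N -> t k = u k) -> mmono n t = mmono n u.
Proof. by move=> tu; apply: eq_bigr => k _; rewrite tu. Qed.

Lemma mmonoS n t : mmono n.+1 t = (mmono n t)%:P * 'X^(t n).
Proof.
rewrite /mmono big_ord_recr /= eqxx rmorph_prod; congr (_ * _).
by apply: eq_bigr => k _ /=; rewrite (ltn_eqF (ltn_ord k)) rmorphXn.
Qed.

Lemma mmonoD n t u : mmono n (fun k => t k + u k)%N = mmono n t * mmono n u.
Proof. by rewrite /mmono -big_split; apply: eq_bigr => k _; rewrite exprD. Qed.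

Lemma mX_mmono n k : (k < n)%N -> mX n k = mmono n (fun i => nat_of_bool (i == k)).
Proof.
move=> kn; rewrite /mmono (bigD1 (Ordinal kn)) //= eqxx expr1 big1 ?mulr1 // => i ik.
by rewrite -val_eqE /= in ik; rewrite (negbTE ik).
Qed.

Lemma mcoef_mmono n e t : mcoef e (mmono n t) = (eq_upto n e t)%:R.
Proof.
elim: n e => [|n IH] e; first by rewrite /mmono big_ord0.
rewrite mmonoS /= coefCM coefXn eq_uptoS.
by case: eqP => _; rewrite ?andbF ?mulr0 ?raddf0 // mulr1 IH andbT.
Qed.

Fixpoint mbound (n : nat) : mpoly n -> nat :=
  match n return mpoly n -> nat with
  | 0 => fun _ => 0%N
  | n'.+1 => fun p : {poly mpoly n'} =>
      maxn (size p) (\max_(i < size p) mbound (p`_i)%R)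
  end.

Lemma mboundP n (p : mpoly n) e :
  mcoef e p != 0 -> forall k, (k < n)%N -> (e k < mbound p)%N.
Proof.
elim: n p e => [//|n IH] p e /= pe0 k.
have en : (e n < size p)%N.
  by rewrite ltnNge; apply: contra pe0 => /(nth_default 0)->; rewrite raddf0.
rewrite ltnS leq_eqVlt leq_max => /orP[/eqP->|kn]; first by rewrite en.
apply/orP; right; apply: leq_trans (IH _ _ pe0 _ kn) _.
exact: (@leq_bigmax _ (fun i : 'I_(size p) => mbound (p`_i)%R) (Ordinal en)).
Qed.

Definition ffexp n D (f : {ffun 'I_n -> 'I_D}) (k : nat) : nat :=
  if insub k is Some i then nat_of_ord (f i) else 0%N.

Lemma ffexpE n D (f : {ffun 'I_n -> 'I_D}) (i : 'I_n) : ffexp f i = f i.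
Proof. by rewrite /ffexp valK. Qed.

Lemma mcoef_decomp n (p : mpoly n) e :
  mcoef e p = \sum_(f : {ffun 'I_n -> 'I_(mbound p)})
                mcoef (ffexp f) p * (eq_upto n e (ffexp f))%:R.
Proof.
have [small|] := boolP [forall k : 'I_n, (e k < mbound p)%N].
  pose f0 := [ffun k : 'I_n => Ordinal (forallP small k)].
  have f0e k : (k < n)%N -> ffexp f0 k = e k.
    by move=> kn; rewrite (ffexpE f0 (Ordinal kn)) ffunE.
  rewrite (bigD1 f0) //= big1 ?addr0 => [|f ff0].
    have -> : eq_upto n e (ffexp f0) by apply/eq_uptoP => k /f0e.
    by rewrite mulr1; apply: eq_mcoef => k /f0e.
  have [/eq_uptoP ef|] := boolP (eq_upto n e (ffexp f)); last by rewrite mulr0.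
  case/eqP: ff0; apply/ffunP => k; apply: val_inj.
  by rewrite ffunE /= -ffexpE -ef.
rewrite negb_forall => /existsP[k big_ek].
have -> : mcoef e p = 0.
  by apply/eqP; apply: contraR big_ek => /mboundP; apply.
rewrite big1 // => f _; have [/eq_uptoP ef|] := boolP (eq_upto n e (ffexp f)).
  by move: big_ek; rewrite ef // ffexpE ltn_ord.
by rewrite mulr0.
Qed.

Lemma mC_rmorph_ex m : exists g : {rmorphism rat -> mpoly m}, mC m =1 g.
Proof.
elim: m => [|m [g gE]]; first by exists idfun.
by exists (polyC \o g) => c /=; rewrite gE.
Qed.

Lemma msubst_rmorph_ex n m (s : nat -> mpoly m) :
  exists g : {rmorphism mpoly n -> mpoly m}, msubst s =1 g.
Proof.
elim: n => [|n [g gE]]; first exact: mC_rmorph_ex.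
exists (horner_eval (s n) \o map_poly g) => p /=.
rewrite /horner_eval (horner_coef_wide _ (size_poly _ _)).
by apply: eq_bigr => i _; rewrite coef_map gE.
Qed.

Section RingMorphisms.
Variables (n m : nat) (s : nat -> mpoly m).

Lemma mC_is_zmod_morphism : zmod_morphism (mC m).
Proof. by have [g gE] := mC_rmorph_ex m => p q; rewrite !gE rmorphB. Qed.

Lemma mC_is_monoid_morphism : monoid_morphism (mC m).
Proof.
have [g gE] := mC_rmorph_ex m.
by split=> [|p q]; rewrite !gE (rmorph1, rmorphM).
Qed.

Lemma msubst_is_zmod_morphism : zmod_morphism (@msubst n m s).
Proof. by have [g gE] := msubst_rmorph_ex n s => p q; rewrite !gE rmorphB. Qed.

Lemma msubst_is_monoid_morphism : monoid_morphism (@msubst n m s).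
Proof.
have [g gE] := msubst_rmorph_ex n s.
by split=> [|p q]; rewrite !gE (rmorph1, rmorphM).
Qed.

HB.instance Definition _ :=
  GRing.isZmodMorphism.Build rat (mpoly m) (mC m) mC_is_zmod_morphism.
HB.instance Definition _ :=
  GRing.isMonoidMorphism.Build rat (mpoly m) (mC m) mC_is_monoid_morphism.
HB.instance Definition _ :=
  GRing.isZmodMorphism.Build (mpoly n) (mpoly m) (@msubst n m s)
    msubst_is_zmod_morphism.
HB.instance Definition _ :=
  GRing.isMonoidMorphism.Build (mpoly n) (mpoly m) (@msubst n m s)
    msubst_is_monoid_morphism.

End RingMorphisms.

(* Rewriting with the generic [rmorph*] lemmas leaves the HB instance, not
   [msubst], in head position, which blocks later rewrites by [msubst_*]
   lemmas; these restatements keep [msubst] visible. *)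
Lemma msubstD n m (s : nat -> mpoly m) (p q : mpoly n) :
  msubst s (p + q) = msubst s p + msubst s q.
Proof. exact: rmorphD. Qed.

Lemma msubst_sum n m (s : nat -> mpoly m) I (r : seq I) (P : pred I) (F : I -> mpoly n) :
  msubst s (\sum_(i <- r | P i) F i) = \sum_(i <- r | P i) msubst s (F i).
Proof. exact: rmorph_sum. Qed.

Lemma msubstM n m (s : nat -> mpoly m) (p q : mpoly n) :
  msubst s (p * q) = msubst s p * msubst s q.
Proof. exact: rmorphM. Qed.

Lemma msubstX n m (s : nat -> mpoly m) (p : mpoly n) k :
  msubst s (p ^+ k) = msubst s p ^+ k.
Proof. exact: rmorphXn. Qed.

Lemma msubstB n m (s : nat -> mpoly m) (p q : mpoly n) :
  msubst s (p - q) = msubst s p - msubst s q.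
Proof. exact: rmorphB. Qed.

Lemma msubstS n m (s : nat -> mpoly m) (p : mpoly n.+1) :
  msubst s p = (map_poly (msubst s) p).[s n].
Proof.
rewrite /= (horner_coef_wide _ (size_poly _ _)).
by apply: eq_bigr => i _; rewrite coef_map.
Qed.

Lemma msubst_mC n m (s : nat -> mpoly m) c : msubst s (mC n c) = mC m c.
Proof. by elim: n => [//|n IH]; rewrite msubstS /= map_polyC hornerC; exact: IH. Qed.

Lemma msubst_mX n m (s : nat -> mpoly m) k : (k < n)%N -> msubst s (mX n k) = s k.
Proof.
elim: n => [//|n IH]; rewrite ltnS leq_eqVlt msubstS /=.
case: eqP => [-> _|_ /IH <-]; first by rewrite map_polyX hornerX.
by rewrite map_polyC hornerC.
Qed.

Lemma msubst_mmono n m (s : nat -> mpoly m) t :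
  msubst s (mmono n t) = \prod_(k < n) s k ^+ t k.
Proof.
by rewrite rmorph_prod; apply: eq_bigr => k _; rewrite rmorphXn /= msubst_mX.
Qed.

Lemma msubstCM n m (s : nat -> mpoly m) c (p : mpoly n) :
  msubst s (mC n c * p) = mC m c * msubst s p.
Proof. by rewrite msubstM msubst_mC. Qed.

Lemma mdecomp n (p : mpoly n) :
  p = \sum_(f : {ffun 'I_n -> 'I_(mbound p)}) mC n (mcoef (ffexp f) p) * mmono n (ffexp f).
Proof.
apply/mpolyP => e; rewrite mcoef_decomp raddf_sum.
by apply: eq_bigr => f _; rewrite /= mcoefCM mcoef_mmono.
Qed.

Lemma mcoef_additive n m (L : {additive mpoly n -> mpoly m}) (p : mpoly n) e :
  (forall c q, L (mC n c * q) = mC m c * L q) ->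
  mcoef e (L p) = \sum_(f : {ffun 'I_n -> 'I_(mbound p)})
                    mcoef (ffexp f) p * mcoef e (L (mmono n (ffexp f))).
Proof.
move=> LC; rewrite {1}[p]mdecomp !raddf_sum.
by apply: eq_bigr => f _; rewrite LC /= mcoefCM.
Qed.

Definition mhom n d (p : mpoly n) :=
  forall e, mcoef e p != 0 -> (\sum_(k < n) e k)%N = d.
Arguments mhom {n} d p.

Section Homogeneity.
Variables (n : nat).
Implicit Types (p q : mpoly n) (d : nat).

Lemma mhom0 d : mhom d (0 : mpoly n).
Proof. by move=> e; rewrite raddf0 eqxx. Qed.

Lemma mhomD d p q : mhom d p -> mhom d q -> mhom d (p + q).
Proof.
move=> hp hq e; rewrite raddfD /=.
by have [/eqP ->|/hp //] := boolP (mcoef e p == 0); rewrite add0r; apply: hq.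
Qed.

Lemma mhomN d p : mhom d p -> mhom d (- p).
Proof. by move=> hp e; rewrite raddfN /= oppr_eq0; apply: hp. Qed.

Lemma mhomCM d c p : mhom d p -> mhom d (mC n c * p).
Proof.
by move=> hp e; rewrite mcoefCM; have [/eqP->|/hp] := boolP (mcoef e p == 0);
  rewrite ?mulr0 ?eqxx.
Qed.

Lemma mhom_sum d I (r : seq I) (P : pred I) (F : I -> mpoly n) :
  (forall i, P i -> mhom d (F i)) -> mhom d (\sum_(i <- r | P i) F i).
Proof. by move=> hF; elim/big_rec: _ => [|i x /hF]; [apply: mhom0 | apply: mhomD]. Qed.

Lemma mhom_mmono (t : nat -> nat) : mhom (\sum_(k < n) t k)%N (mmono n t).
Proof.
move=> e; rewrite mcoef_mmono.
have [/eq_uptoP et _|] := boolP (eq_upto n e t); last by rewrite eqxx.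
by apply: eq_bigr => k _; rewrite et.
Qed.

Lemma mhom1 : mhom 0 (1 : mpoly n).
Proof.
have := mhom_mmono (t := fun _ => 0%N); rewrite big1 // /mmono.
by under eq_bigr do rewrite expr0; rewrite big1_eq.
Qed.

Lemma mhomM d1 d2 p q : mhom d1 p -> mhom d2 q -> mhom (d1 + d2) (p * q).
Proof.
move=> hp hq; rewrite [p]mdecomp [q]mdecomp mulr_suml.
apply: mhom_sum => f _; rewrite mulr_sumr; apply: mhom_sum => g _.
have [/eqP->|pf] := boolP (mcoef (ffexp f) p == 0).
  by rewrite rmorph0 !mul0r; apply: mhom0.
have [/eqP->|qg] := boolP (mcoef (ffexp g) q == 0).
  by rewrite rmorph0 mul0r mulr0; apply: mhom0.
rewrite mulrACA -rmorphM -mmonoD; apply: mhomCM.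
by rewrite -(hp _ pf) -(hq _ qg) -big_split; apply: mhom_mmono.
Qed.

Lemma mhom_prod I (r : seq I) (P : pred I) (F : I -> mpoly n) (d : I -> nat) :
  (forall i, P i -> mhom (d i) (F i)) ->
  mhom (\sum_(i <- r | P i) d i)%N (\prod_(i <- r | P i) F i).
Proof.
move=> hF; elim/big_rec2: _ => [|i x y /hF hi hy]; [exact: mhom1 | exact: mhomM].
Qed.

Lemma mhom_mX k : (k < n)%N -> mhom 1 (mX n k).
Proof.
move=> kn; rewrite mX_mmono //.
have := mhom_mmono (t := fun i => nat_of_bool (i == k)).
rewrite (bigD1 (Ordinal kn)) //= eqxx big1 // => i ik.
by rewrite -val_eqE /= in ik; rewrite (negbTE ik).
Qed.

End Homogeneity.

Lemma mhom_msubst n m (s : nat -> mpoly m) d (p : mpoly n) :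
  (forall k, (k < n)%N -> mhom 1 (s k)) -> mhom d p -> mhom d (msubst s p).
Proof.
move=> hs hp; rewrite [p]mdecomp rmorph_sum; apply: mhom_sum => f _ /=.
rewrite msubstCM msubst_mmono.
have [/eqP->|pf] := boolP (mcoef (ffexp f) p == 0).
  by rewrite rmorph0 mul0r; apply: mhom0.
apply: mhomCM; rewrite -(hp _ pf).
under eq_bigr do rewrite -[ffexp f _]mul1n.
apply: mhom_prod => k _; elim: (ffexp f k) => [|i IH]; first exact: mhom1.
by rewrite exprS mulnS; apply: mhomM => //; apply: hs.
Qed.

Definition totally_even n (e : nat -> nat) :=
  all (fun k => ~~ odd (e k) && (2 <= e k)%N) (iota 0 n).

Lemma totally_evenS n e :
  totally_even n.+1 e = totally_even n e && (~~ odd (e n) && (2 <= e n)%N).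
Proof. by rewrite /totally_even -(addn1 n) iotaD all_cat /= andbT. Qed.

Lemma mcoef_rte n e (p : mpoly n) :
  mcoef e (rte p) = if totally_even n e then mcoef e p else 0.
Proof.
elim: n e p => [//|n IH] e p /=; rewrite coef_sum totally_evenS.
under eq_bigr do rewrite coefCM coefXn.
have [en|pe] := ltnP (e n) (size p); last first.
  rewrite big1 => [|i _]; first by rewrite raddf0 nth_default // raddf0; case: ifP.
  by rewrite (gtn_eqF (leq_trans (ltn_ord i) pe)) mulr0.
rewrite big_mkcond (bigD1 (Ordinal en)) //= eqxx mulr1 big1 => [|i]; last first.
  by rewrite -val_eqE eq_sym /= => /negbTE->; case: ifP; rewrite ?mulr0.
by rewrite addr0; case: ifP; rewrite ?andbT ?andbF ?raddf0 // IH.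
Qed.

Definition phi_subst r j (i o : nat) : nat -> mpoly r := fun p =>
  if (p < r - j)%N then mX r p
  else if p == (r - j)%N then mX r i - mX r i.-1
  else mX r (bump o p.-1).

Definition psi r j (Q : mpoly r) : mpoly r :=
  Q + \sum_(r - j + 1 <= i < r)
        (msubst (phi_subst r j i i) Q - msubst (phi_subst r j i i.-1) Q).

Arguments psi : clear implicits.

Lemma phiE r j Q : phi r j Q = rte (psi r j Q).
Proof. by []. Qed.

Lemma psi_is_zmod_morphism r j : zmod_morphism (psi r j).
Proof.
move=> p q; rewrite /psi; under eq_bigr do rewrite !(raddfB (msubst _)).
rewrite opprD addrACA -sumrB; congr (_ + _); apply: eq_bigr => i _.
by rewrite !opprD !opprK addrACA.
Qed.

HB.instance Definition _ r j :=
  GRing.isZmodMorphism.Build (mpoly r) (mpoly r) (psi r j) (@psi_is_zmod_morphism r j).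

Lemma psiCM r j c (p : mpoly r) : psi r j (mC r c * p) = mC r c * psi r j p.
Proof.
rewrite /psi mulrDr mulr_sumr; congr (_ + _).
by apply: eq_bigr => i _; rewrite !msubstCM mulrBr.
Qed.

Definition head_exps a (t : nat -> nat) k := if (k < a)%N then t k else 0%N.

Definition shift_vars r a (p : nat) : mpoly r := mX r (a + p).

Definition ihara_mono b (u : nat -> nat) : mpoly b.+1 :=
  ihara ('X ^+ u 0 : {poly rat}) (mmono b (fun k => u k.+1)).

Lemma mmono_head a j t :
  mmono (a + j) (head_exps a t) = \prod_(k < a) mX (a + j) k ^+ t k.
Proof.
rewrite /mmono big_split_ord /= [X in _ * X]big1 ?mulr1 => [|k _].
  by apply: eq_bigr => k _; rewrite /head_exps ltn_ord.
by rewrite /head_exps ltnNge leq_addr.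
Qed.

Lemma mmono_split a j t :
  mmono (a + j) t = mmono (a + j) (head_exps a t) *
                    \prod_(k < j) mX (a + j) (a + k) ^+ t (a + k)%N.
Proof. by rewrite mmono_head /mmono big_split_ord. Qed.

Lemma msubst_phi_subst_mmono a b i o t :
  msubst (phi_subst (a + b.+1) b.+1 i o) (mmono (a + b.+1) t) =
  mmono (a + b.+1) (head_exps a t) *
  ((mX _ i - mX _ i.-1) ^+ t a *
   \prod_(k < b) mX (a + b.+1) (bump o (a + k)) ^+ t (a + k.+1)%N).
Proof.
rewrite msubst_mmono big_split_ord mmono_head /phi_subst addnK.
congr (_ * _); first by apply: eq_bigr => k _; cbn [nat_of_ord lshift]; rewrite ltn_ord.
rewrite big_ord_recl; cbn [nat_of_ord rshift lift ord0].
rewrite addn0 ltnn eqxx; congr (_ * _).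
apply: eq_bigr => k _; rewrite /bump add1n.
have -> : (a + k.+1 < a)%N = false by rewrite ltnNge leq_addr.
have -> : (a + k.+1 == a) = false by rewrite -{2}[a]addn0 eqn_add2l.
by have -> : (a + k.+1).-1 = (a + k)%N by rewrite addnS.
Qed.

Lemma msubst_Xn m (z : mpoly m) k :
  msubst (n := 1) (fun _ => z) ('X ^+ k : {poly rat}) = z ^+ k.
Proof. by rewrite rmorphXn; congr (_ ^+ _); exact: (msubst_mX _ (ltnSn 0)). Qed.

Lemma msubst_shift_vars a j i : (i < j)%N ->
  msubst (shift_vars (a + j) a) (mX j i) = mX (a + j) (a + i).
Proof. exact: msubst_mX. Qed.

Lemma msubst_shift_bump a b o u :
  msubst (shift_vars (a + b.+1) a) (msubst (fun p => mX b.+1 (bump o p)) (mmono b u)) =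
  \prod_(k < b) mX (a + b.+1) (a + bump o k) ^+ u k.
Proof.
rewrite msubst_mmono rmorph_prod; apply: eq_bigr => k _.
rewrite rmorphXn; congr (_ ^+ _); apply: msubst_shift_vars.
by rewrite /bump; case: (o <= k)%N; rewrite ?add1n ?add0n ltnS // ltnW.
Qed.

Lemma bumpDl a o k : bump (a + o) (a + k) = (a + bump o k)%N.
Proof. by rewrite /bump leq_add2l addnCA. Qed.

Lemma psi_mmono a b t :
  psi (a + b.+1) b.+1 (mmono (a + b.+1) t) =
  mmono (a + b.+1) (head_exps a t) *
  msubst (shift_vars (a + b.+1) a) (ihara_mono b (fun k => t (a + k)%N)).
Proof.
rewrite /psi /ihara_mono /ihara addnK addn0; cbv zeta.
rewrite msubstD msubst_sum mulrDr; congr (_ + _).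
  rewrite mmono_split big_ord_recl addn0; congr (_ * _).
  by rewrite msubstM msubst_Xn msubstX msubst_shift_vars // msubst_shift_bump addn0.
rewrite mulr_sumr [(a + 1)%N]addnC big_addn addKn.
apply: eq_big_nat => i /andP[i1 ib].
have ia : (i + a = a + i)%N by rewrite addnC.
have ia1 : ((i + a).-1 = a + i.-1)%N by lia.
have i1b : (i.-1 < b.+1)%N by rewrite (leq_ltn_trans (leq_pred i) ib).
rewrite !msubst_phi_subst_mmono msubstB mulrBr; congr (_ * _ - _ * _).
- rewrite !msubstM msubst_Xn msubstX msubstB !msubst_shift_vars // msubst_shift_bump.
  by rewrite ia1 ia; under eq_bigr do rewrite bumpDl.
- rewrite !msubstM msubst_Xn msubstX msubstB !msubst_shift_vars // msubst_shift_bump.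
  rewrite msubstX rmorphN1 size_polyXn -exprMn mulN1r opprB ia1 ia.
  by under eq_bigr do rewrite bumpDl.
Qed.

Lemma mmono_head_shift a j t (u : nat -> nat) :
  mmono (a + j) (head_exps a t) * msubst (shift_vars (a + j) a) (mmono j u) =
  mmono (a + j) (fun k => if (k < a)%N then t k else u (k - a)%N).
Proof.
rewrite msubst_mmono mmono_head /mmono big_split_ord; congr (_ * _).
  by apply: eq_bigr => k _; cbn [nat_of_ord lshift]; rewrite ltn_ord.
by apply: eq_bigr => k _; cbn [nat_of_ord rshift]; rewrite ltnNge leq_addr addKn.
Qed.

Lemma mcoef_head_shift a j e t (H : mpoly j) :
  mcoef e (mmono (a + j) (head_exps a t) * msubst (shift_vars (a + j) a) H) =
  (eq_upto a e t)%:R * mcoef (fun k => e (a + k)%N) H.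
Proof.
rewrite {1}[H]mdecomp msubst_sum mulr_sumr raddf_sum mcoef_decomp mulr_sumr /=.
apply: eq_bigr => f _; rewrite msubstCM mulrCA mmono_head_shift mcoefCM.
by rewrite mcoef_mmono eq_upto_cat; case: (eq_upto a e t); rewrite ?mul1r ?mul0r ?mulr0.
Qed.

Lemma mcoef_psi_mmono a b e t :
  mcoef e (psi (a + b.+1) b.+1 (mmono (a + b.+1) t)) =
  (eq_upto a e t)%:R *
  mcoef (fun k => e (a + k)%N) (ihara_mono b (fun k => t (a + k)%N)).
Proof. by rewrite psi_mmono mcoef_head_shift. Qed.

Lemma mcoef_psi_eq0 a b e (P : mpoly (a + b.+1)) :
  (forall t, eq_upto a e t -> mcoef t P = 0) ->
  mcoef e (psi (a + b.+1) b.+1 P) = 0.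
Proof.
move=> Pe0; rewrite (mcoef_additive _ _ (@psiCM _ _)); apply: big1 => f _.
rewrite mcoef_psi_mmono.
by have [/Pe0->|_] := boolP (eq_upto a e (ffexp f)); rewrite mul0r ?mulr0.
Qed.

Definition index_seq n (t : nat -> nat) := mkseq (fun k => (t k).+1) n.

Lemma size_index_seq n t : size (index_seq n t) = n.
Proof. exact: size_mkseq. Qed.

Lemma expo_index_seq n t k : (k < n)%N -> expo (index_seq n t) k = t k.
Proof. by move=> kn; rewrite /expo nth_mkseq. Qed.

Lemma eq_index_seq n t u :
  (forall k, (k < n)%N -> t k = u k) -> index_seq n t = index_seq n u.
Proof. by move=> tu; apply/eq_in_map => k; rewrite mem_iota => /andP[_ /tu->]. Qed.

Lemma index_seq_cat a j t :
  index_seq (a + j) t = index_seq a t ++ index_seq j (fun k => t (a + k)%N).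
Proof.
rewrite /index_seq /mkseq iotaD map_cat add0n; congr (_ ++ _).
by rewrite -[a in iota a]addn0 iotaDl -map_comp.
Qed.

Lemma sumn_index_seq n t : sumn (index_seq n t) = (\sum_(k < n) t k + n)%N.
Proof.
rewrite /index_seq /mkseq sumnE big_map; under eq_bigr do rewrite -addn1.
rewrite big_split /= sum1_size size_iota; congr (_ + _).
by rewrite -(big_mkord xpredT) /index_iota subn0.
Qed.

Lemma expo_cat_lt s l k : (k < size s)%N -> expo (s ++ l) k = expo s k.
Proof. by move=> ks; rewrite /expo nth_cat ks. Qed.

Lemma expo_cat_ge s l k : expo (s ++ l) (size s + k) = expo l k.
Proof. by rewrite /expo nth_cat ltnNge leq_addr addKn. Qed.

Lemma eq_upto_expo j u l : all (leq 1) l -> size l = j ->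
  eq_upto j u (expo l) = (index_seq j u == l).
Proof.
move=> /allP l_pos lj; apply/eq_uptoP/eqP => [ul|<- k kj]; last exact/esym/expo_index_seq.
apply: (eq_from_nth (x0 := 1%N)); rewrite size_index_seq // => k kj.
rewrite /index_seq nth_mkseq // ul // /expo prednK //.
by apply: l_pos; rewrite mem_nth ?lj.
Qed.

Lemma inS_pos N r l : inS N r l -> all (leq 1) l.
Proof.
case/and3P=> _ /allP l3 _; apply/allP => x /l3 /andP[_ x3].
exact: leq_trans x3.
Qed.

Lemma leq_sumn_mem l x : x \in l -> (x <= sumn l)%N.
Proof.
elim: l => [//|y l IH]; rewrite inE /= => /orP[/eqP->|/IH]; first exact: leq_addr.
by move/leq_trans; apply; apply: leq_addl.
Qed.

Lemma inS_catr N a j s l : size s = a -> inS N (a + j) (s ++ l) ->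
  inS (N - sumn s) j l.
Proof.
move=> sa /and3P[/eqP sl]; rewrite all_cat sumn_cat => /andP[_ l3] /eqP <-.
by move: sl; rewrite /inS l3 addKn eqxx size_cat sa !andbT => /addnI->.
Qed.

Lemma exists_tuple_ord M j l : size l = j -> all (fun x => x <= M)%N l ->
  exists v : j.-tuple 'I_M.+1, map val v = l.
Proof.
move=> lj /allP lM; have sz : size (map (@inord M) l) == j by rewrite size_map lj.
exists (Tuple sz); rewrite /= -map_comp; apply: map_id_in => x /lM xM /=.
by rewrite inordK.
Qed.

Lemma map_val_tuple_inj M j : injective (fun v : j.-tuple 'I_M => map val v).
Proof. by move=> v v' /(inj_map val_inj) /val_inj. Qed.

Lemma index_seq_pos n t : all (leq 1) (index_seq n t).
Proof. by apply/allP => x /mapP[k _ ->]. Qed.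

Lemma inS_leq N r l : inS N r l -> all (fun x => x <= N)%N l.
Proof. by case/and3P=> _ _ /eqP <-; apply/allP => x; apply: leq_sumn_mem. Qed.

Lemma eq_upto_expo_cat a j t l : all (leq 1) l -> size l = j ->
  eq_upto (a + j) t (expo (index_seq a t ++ l)) =
  (index_seq j (fun k => t (a + k)%N) == l).
Proof.
move=> l_pos lj; rewrite -(eq_upto_expo _ l_pos lj).
rewrite (@eq_upto_ext _ _ _ (fun k => if (k < a)%N then t k else expo l (k - a))).
  by rewrite eq_upto_cat (_ : eq_upto a t t) //; apply/eq_uptoP.
move=> k _; case: ltnP => [ka|ak]; first by rewrite expo_cat_lt ?size_index_seq ?expo_index_seq.
by have := expo_cat_ge (index_seq a t) l (k - a); rewrite size_index_seq subnKC.
Qed.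

Lemma eq_ihara_mono b u u' :
  (forall k, (k <= b)%N -> u k = u' k) -> ihara_mono b u = ihara_mono b u'.
Proof.
move=> uu'; rewrite /ihara_mono uu' // (@eq_mmono _ _ (fun k => u' k.+1)) // => k kb.
exact: uu'.
Qed.

Section CoefficientFormula.
Variables (N a b : nat) (Q : mpoly (a + b.+1)) (e : nat -> nat).
Hypothesis QV : inV N (a + b.+1) Q.

Local Notation r := (a + b.+1)%N.
Local Notation s := (index_seq a e).
Local Notation M := (N - sumn s)%N.

(* The monomials of [Q] whose first [a] exponents are those of [e]; by
   [inV N r Q] these are all indexed by [s ++ v] with [v] in [S_{M, b+1}]. *)
Let Qblock := \sum_(v : b.+1.-tuple 'I_M.+1 | inS M b.+1 (map val v))
  mC r (piR r Q s (map val v)) * mmono r (expo (s ++ map val v)).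

Lemma mcoef_psi_block :
  mcoef e (psi r b.+1 Qblock) =
  \sum_(v : b.+1.-tuple 'I_M.+1 | inS M b.+1 (map val v))
     piR r Q s (map val v) * ecoef b (map val v) (index_seq b.+1 (fun k => e (a + k)%N)).
Proof.
rewrite /Qblock !raddf_sum; apply: eq_bigr => v vS /=.
rewrite psiCM mcoefCM mcoef_psi_mmono.
have -> : eq_upto a e (expo (s ++ map val v)).
  by apply/eq_uptoP => k ka; rewrite expo_cat_lt ?size_index_seq ?expo_index_seq.
rewrite mul1r; congr (_ * _).
have -> : ecoef b (map val v) (index_seq b.+1 (fun k => e (a + k)%N)) =
    mcoef (expo (index_seq b.+1 (fun k => e (a + k)%N)))
      (ihara_mono b (expo (map val v))) by [].
rewrite (eq_mcoef _ (e' := fun k => e (a + k)%N)) => [|k kb]; last exact: expo_index_seq.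
congr (mcoef _ _); apply: eq_ihara_mono => k _.
by have := expo_cat_ge s (map val v) k; rewrite size_index_seq.
Qed.

Lemma mcoef_block t : eq_upto a e t -> mcoef t Qblock = mcoef t Q.
Proof.
move=> /eq_uptoP et; set wt := index_seq b.+1 (fun k => t (a + k)%N).
have st : s = index_seq a t by apply: eq_index_seq.
have expo_v (v : b.+1.-tuple 'I_M.+1) : inS M b.+1 (map val v) ->
    eq_upto r t (expo (s ++ map val v)) = (wt == map val v).
  by move=> /inS_pos v_pos; rewrite {1}st eq_upto_expo_cat // size_map (size_tuple v).
have Qwt : mcoef t Q = piR r Q s wt.
  have /eq_uptoP : eq_upto r t (expo (s ++ wt)).
    by rewrite st eq_upto_expo_cat ?index_seq_pos ?size_index_seq.
  exact: eq_mcoef.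
rewrite /Qblock raddf_sum /=.
under eq_bigr => v vS do rewrite mcoefCM mcoef_mmono expo_v //.
have [tQ0|tQ] := eqVneq (mcoef t Q) 0.
  by rewrite tQ0 big1 // => v _; case: eqP => [<-|]; rewrite -?Qwt ?tQ0 ?mulr0.
have sS : inS N r (s ++ wt) by rewrite st -index_seq_cat; apply: QV.
have wtS : inS M b.+1 wt by apply: inS_catr sS; rewrite size_index_seq.
have [v0 v0wt] := exists_tuple_ord (size_index_seq _ _) (inS_leq wtS).
rewrite (bigD1 v0) ?v0wt //= eqxx mulr1 -Qwt big1 ?addr0 // => v /andP[_ vv0].
case: eqP => [wtv|_]; last by rewrite mulr0.
by move: vv0; rewrite (map_val_tuple_inj (etrans v0wt wtv)) eqxx.
Qed.

Lemma mcoef_psi_formula :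
  mcoef e (psi r b.+1 Q) =
  \sum_(v : b.+1.-tuple 'I_M.+1 | inS M b.+1 (map val v))
     piR r Q s (map val v) * ecoef b (map val v) (index_seq b.+1 (fun k => e (a + k)%N)).
Proof.
have -> : psi r b.+1 Q = psi r b.+1 (Q - Qblock) + psi r b.+1 Qblock.
  by rewrite -raddfD subrK.
rewrite raddfD /= mcoef_psi_eq0 ?add0r ?mcoef_psi_block // => t et.
by rewrite raddfB /= mcoef_block ?subrr.
Qed.

End CoefficientFormula.

Lemma mhom_psi r j d (Q : mpoly r) : mhom d Q -> mhom d (psi r j Q).
Proof.
move=> hQ; apply: mhomD => //; rewrite big_nat_cond.
apply: mhom_sum => i /andP[/andP[ji ir] _].
have subst_deg1 o k : (k < r)%N -> mhom 1 (phi_subst r j i o k).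
  move=> kr; rewrite /phi_subst.
  case: ifP => _; first exact: mhom_mX.
  case: ifP => _; first by apply: mhomD; [|apply: mhomN]; apply: mhom_mX; lia.
  by apply: mhom_mX; rewrite /bump; lia.
by apply: mhomD; [|apply: mhomN]; apply: mhom_msubst => // k /subst_deg1.
Qed.

Lemma mhom_inV N r Q : inV N r Q -> mhom (N - r) Q.
Proof.
move=> QV e /QV /and3P[_ _ /eqP]; rewrite -/(index_seq r e) sumn_index_seq.
by move=> <-; rewrite addnK.
Qed.

Lemma all_iotaD (P : pred nat) a j :
  all P (iota 0 (a + j)) = all P (iota 0 a) && all (fun k => P (a + k)%N) (iota 0 j).
Proof.
rewrite iotaD all_cat add0n; congr (_ && _).
by rewrite -{1}(addn0 a) iotaDl all_map.
Qed.

Lemma totally_even_cat a j e :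
  totally_even (a + j) e = totally_even a e && totally_even j (fun k => e (a + k)%N).
Proof. exact: all_iotaD. Qed.

Lemma odd3_pred x : odd x && (3 <= x)%N = ~~ odd x.-1 && (2 <= x.-1)%N.
Proof. by case: x => [|x] //=; rewrite negbK. Qed.

Lemma totally_even_expo n l :
  all (fun x => odd x && (3 <= x)%N) l -> size l = n -> totally_even n (expo l).
Proof.
move=> /allP l3 <-; apply/allP => k; rewrite mem_iota add0n => /andP[_ kl].
by rewrite -odd3_pred l3 // mem_nth.
Qed.

Lemma inS_index_seq n t :
  totally_even n t -> inS (sumn (index_seq n t)) n (index_seq n t).
Proof.
move=> /allP te; rewrite /inS size_index_seq !eqxx andbT /=.
by apply/allP => _ /mapP[k kn ->]; rewrite odd3_pred te.
Qed.

Lemma index_seq_expo l : all (leq 1) l -> index_seq (size l) (expo l) = l.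
Proof. by move=> l_pos; apply/eqP; rewrite -eq_upto_expo //; apply/eq_uptoP. Qed.

Section KernelCriterion.
Variables (N a b : nat) (Q : mpoly (a + b.+1)).
Hypothesis QV : inV N (a + b.+1) Q.

Lemma mcoef_psi_expo s l : size s = a -> all (leq 1) s -> all (leq 1) l -> size l = b.+1 ->
  mcoef (expo (s ++ l)) (psi _ b.+1 Q) =
  \sum_(v : b.+1.-tuple 'I_(N - sumn s).+1 | inS (N - sumn s) b.+1 (map val v))
     piR _ Q s (map val v) * ecoef b (map val v) l.
Proof.
move=> sa s_pos l_pos lb; rewrite (mcoef_psi_formula _ QV).
have -> : index_seq a (expo (s ++ l)) = s.
  rewrite -[RHS](index_seq_expo s_pos) sa; apply: eq_index_seq => k ka.
  by rewrite expo_cat_lt ?sa.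
have -> // : index_seq b.+1 (fun k => expo (s ++ l) (a + k)%N) = l.
rewrite -[RHS](index_seq_expo l_pos) lb; apply: eq_index_seq => k _.
by rewrite -sa expo_cat_ge.
Qed.

Lemma psi_support e : totally_even (a + b.+1) e -> mcoef e (psi _ b.+1 Q) != 0 ->
  [/\ inS (sumn (index_seq a e)) a (index_seq a e), (sumn (index_seq a e) < N)%N
    & inS (N - sumn (index_seq a e)) b.+1 (index_seq b.+1 (fun k => e (a + k)%N))].
Proof.
rewrite totally_even_cat => /andP[te_a te_b] /(mhom_psi (mhom_inV QV)) sum_e.
have /inS_index_seq sS := te_a; have /inS_index_seq wS := te_b.
have e_ge2 : (2 <= e (a + b))%N.
  by move: te_b => /allP/(_ b); rewrite mem_iota ltnSn => /(_ isT)/andP[].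
have N_sum : (sumn (index_seq a e) + sumn (index_seq b.+1 (fun k => e (a + k)%N)) = N)%N.
  rewrite -sumn_cat -index_seq_cat sumn_index_seq sum_e subnK //.
  (* [mhom] only gives the truncated [N - r]: a positive degree forces [r <= N]. *)
  have : (2 <= \sum_(k < a + b.+1) e k)%N.
    have ab : (a + b < a + b.+1)%N by rewrite addnS.
    by rewrite (bigD1 (Ordinal ab)) //= (leq_trans e_ge2) ?leq_addr.
  by rewrite sum_e; lia.
split=> //; last by rewrite -N_sum addKn.
by rewrite -N_sum -addn1 leq_add2l sumn_index_seq addnS.
Qed.

End KernelCriterion.

Theorem lemma4p7 (N r j : nat) (Q : mpoly r) :
  (1 <= j)%N -> (j <= r - 1)%N -> inV N r Q ->
  (phi r j Q = 0 <->
   forall s : seq nat, inS (sumn s) (r - j) s -> (sumn s < N)%N ->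
   forall w : j.-tuple 'I_(N - sumn s).+1, inS (N - sumn s) j (map val w) ->
   \sum_(v : j.-tuple 'I_(N - sumn s).+1 | inS (N - sumn s) j (map val v))
      piR r Q s (map val v) * ecoef j.-1 (map val v) (map val w) = 0).
Proof.
case: j => [//|b] _ jr QV.
have [a ra] : exists a, r = (a + b.+1)%N by exists (r - b.+1)%N; rewrite subnK //; lia.
subst r; rewrite addnK phiE; split => [phi0 s sS sN w wS | vanish].
  have /and3P[/eqP sa s3 _] := sS.
  rewrite -(mcoef_psi_expo QV) ?(inS_pos sS) ?(inS_pos wS) ?size_map ?size_tuple //.
  have te : totally_even (a + b.+1) (expo (s ++ map val w)).
    apply: totally_even_expo; last by rewrite size_cat sa size_map size_tuple.
    by rewrite all_cat s3; case/and3P: wS.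
  by have := congr1 (mcoef (expo (s ++ map val w))) phi0; rewrite mcoef_rte te raddf0.
apply/mpolyP => e; rewrite mcoef_rte raddf0; case: ifP => // te.
apply/eqP; apply: contraT => nz; have [sS sN wS] := psi_support QV te nz.
have [w wE] := exists_tuple_ord (size_index_seq _ _) (inS_leq wS).
by move: nz; rewrite (mcoef_psi_formula _ QV) -wE vanish ?eqxx // wE.
Qed.
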